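(* Let $p$ be an odd prime and let $J$ be a finite family of lattice points in $\mathbb{Z}^2$ (repetitions allowed) with $|J|=3p-2$ or $|J|=3p-1$. Then \[ 1-(p,J)+(2p,J)\equiv 0 \pmod p. \]
   Context: For a finite family $X$ of lattice points in $\mathbb{Z}^2$ (points may repeat; subsets are subfamilies, i.e. subsets of the index set) and an integer $n\ge 0$, $(n,X)$ denotes the number of $n$-element subfamilies of $X$ whose coordinatewise sum is congruent to $(0,0)$ modulo $p$. *)

From mathcomp Require Import all_boot all_order all_algebra.
Set Implicit Arguments. Unset Strict Implicit. Unset Printing Implicit Defensive.
Import GRing.Theory Num.Theory.
Local Open Scope ring_scope.

(* A finite family of lattice points of Z^2 (repetitions allowed) is a sequence
   of pairs of integers; subfamilies are subsets of the index set 'I_(size X). *)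

Definition fam_sum (X : seq (int * int)) (S : {set 'I_(size X)}) : int * int :=
  (\sum_(i in S) (tnth (in_tuple X) i).1, \sum_(i in S) (tnth (in_tuple X) i).2).

(* (n, X) : number of n-element subfamilies with sum = (0,0) mod p *)
Definition zsum_count (p : nat) (n : nat) (X : seq (int * int)) : nat :=
  #|[set S : {set 'I_(size X)} | (#|S| == n)%N &&
      (((fam_sum S).1 %% p%:Z)%Z == 0) && (((fam_sum S).2 %% p%:Z)%Z == 0)]|.

From mathcomp Require Import all_boot all_order all_algebra all_field.
From mathcomp Require Import zify.
Set Implicit Arguments. Unset Strict Implicit. Unset Printing Implicit Defensive.
Import GRing.Theory.
Local Open Scope ring_scope.

(* Chevalley-Warning over 'F_p, applied to the three linear forms "first
   coordinate sum", "second coordinate sum" and "number of points" of a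
   subfamily S of J.  The product of the Fermat factors 1 - L(S) ^+ (p - 1) is
   the indicator of "S has zero sum mod p and p divides |S|"; as a polynomial in
   the membership indicators [i \in S] it has degree 3(p - 1) < |J|, so its
   alternating sum over all S vanishes.  Since |S| < 3p, only |S| = 0, p, 2p
   contribute, with signs +, -, + because p is odd. *)

Section LowDegree.
Variables (R : comPzRingType) (m : nat).
Implicit Types (d : nat) (S T : {set 'I_m}) (F G : {set 'I_m} -> R).

(* The functions S |-> P([i \in S])_i for P a polynomial of degree at most d;
   [low_degree_ext] closes the class under pointwise equality. *)
Inductive low_degree : nat -> ({set 'I_m} -> R) -> Prop :=
| low_degree_const d c : low_degree d (fun _ => c)
| low_degree_add d F G :
    low_degree d F -> low_degree d G -> low_degree d (fun S => F S + G S)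
| low_degree_scale d c F : low_degree d F -> low_degree d (fun S => c * F S)
| low_degree_mul_linear d g F :
    low_degree d F -> low_degree d.+1 (fun S => F S * \sum_(i in S) g i)
| low_degree_ext d F G : low_degree d F -> F =1 G -> low_degree d G.

Lemma low_degree_linear g : low_degree 1 (fun S => \sum_(i in S) g i).
Proof.
exact: low_degree_ext (low_degree_mul_linear g (low_degree_const 0 1)) (fun S => mul1r _).
Qed.

Lemma low_degree_weaken d F d' : low_degree d F -> (d <= d')%N -> low_degree d' F.
Proof.
move=> HF; elim: HF d' => {d F}.
- by move=> d c d' _; apply: low_degree_const.
- move=> d F G _ IHF _ IHG d' le_dd'.
  by apply: low_degree_add; [apply: IHF|apply: IHG].
- by move=> d c F _ IHF d' le_dd'; apply/low_degree_scale/IHF.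
- by move=> d g F _ IHF [//|d'] le_dd'; apply/low_degree_mul_linear/IHF.
- by move=> d F G _ IHF eFG d' le_dd'; apply: low_degree_ext (IHF d' le_dd') eFG.
Qed.

Lemma low_degree_mul d F d' G :
  low_degree d F -> low_degree d' G -> low_degree (d + d') (fun S => F S * G S).
Proof.
move=> HF; elim=> {d' G}.
- move=> d' c; have HF' := low_degree_weaken HF (leq_addr d' d).
  by apply: low_degree_ext (low_degree_scale c HF') _ => S; rewrite mulrC.
- move=> d' G1 G2 _ IH1 _ IH2.
  by apply: low_degree_ext (low_degree_add IH1 IH2) _ => S; rewrite mulrDr.
- move=> d' c G _ IH.
  by apply: low_degree_ext (low_degree_scale c IH) _ => S; rewrite mulrCA.
- move=> d' g G _ IH; rewrite addnS.
  by apply: low_degree_ext (low_degree_mul_linear g IH) _ => S; rewrite mulrA.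
- by move=> d' G1 G2 _ IH eG; apply: low_degree_ext IH _ => S; rewrite eG.
Qed.

Lemma low_degree_exp d F n : low_degree d F -> low_degree (n * d) (fun S => F S ^+ n).
Proof.
move=> HF; elim: n => [|n IHn].
  exact: low_degree_ext (low_degree_const _ 1) (fun S => esym (expr0 _)).
rewrite mulSn; exact: low_degree_ext (low_degree_mul HF IHn) (fun S => esym (exprS _ _)).
Qed.

Lemma low_degree_prod (I : Type) (r : seq I) d (Fs : I -> {set 'I_m} -> R) :
    (forall i, low_degree d (Fs i)) ->
  low_degree (size r * d) (fun S => \prod_(i <- r) Fs i S).
Proof.
move=> HFs; elim: r => [|i r IHr].
  by apply: low_degree_ext (low_degree_const _ 1) _ => S; rewrite big_nil.
rewrite /= mulSn.
by apply: low_degree_ext (low_degree_mul (HFs i) IHr) _ => S; rewrite big_cons.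
Qed.

Lemma sum_supset_sign T : (#|T| < m)%N ->
  \sum_(S : {set 'I_m} | T \subset S) (-1) ^+ #|S| = 0 :> R.
Proof.
move=> ltTm; have : (0 < #|~: T|)%N by move: (cardsC T); rewrite card_ord; lia.
case/card_gt0P => j; rewrite inE => jNT.
rewrite (bigID (fun S => j \in S)) /=.
rewrite (reindex_onto (fun S => j |: S) (fun S => S :\ j)) /=; last first.
  by move=> S /andP [_ ?]; rewrite setD1K.
rewrite (eq_bigl (fun S => (T \subset S) && (j \notin S))); last first.
  move=> S; case: (boolP (j \in S)) => jS /=.
    rewrite andbF; apply/negbTE/negP => /andP [_ /eqP eS].
    by move: jS; rewrite -eS setD11.
  rewrite setU1K // eqxx setU11 !andbT; apply/idP/idP => sTS.
    by move: sTS; rewrite -subDset (setDidPl _) // disjoint_sym disjoints1.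
  exact: subset_trans sTS (subsetUr _ _).
rewrite -big_split big1 //= => S /andP [_ jNS].
by rewrite cardsU1 jNS exprS mulN1r addNr.
Qed.

Lemma alternating_sum_supset_eq0 d F : low_degree d F ->
  forall T, (#|T| + d < m)%N ->
  \sum_(S : {set 'I_m} | T \subset S) (-1) ^+ #|S| * F S = 0.
Proof.
elim=> {d F} [d c | d F G _ IHF _ IHG | d c F _ IHF | d g F _ IHF | d F G _ IHF eFG]
  T ltTm.
- by rewrite -mulr_suml sum_supset_sign ?mul0r //; lia.
- by rewrite (eq_bigr _ (fun S _ => mulrDr _ _ _)) big_split /= IHF // IHG // addr0.
- by rewrite (eq_bigr _ (fun S _ => mulrCA _ _ _)) -mulr_sumr IHF // mulr0.
- (* exchange the sums over S and over i \in S; the inner sum is over S with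
     i |: T \subset S, and |i |: T| + d < m *)
  under eq_bigr => S _ do rewrite mulrA mulr_sumr.
  rewrite (exchange_big_dep predT) //= big1 // => i _.
  rewrite (eq_bigl (fun S => i |: T \subset S)) => [|S]; last first.
    by rewrite subUset sub1set andbC.
  rewrite -mulr_suml IHF ?mul0r //.
  by move: ltTm; rewrite cardsU1; case: (i \in T) => /=; lia.
- by rewrite -(eq_bigr _ (fun S _ => congr1 _ (eFG S))) IHF.
Qed.

Lemma alternating_sum_eq0 d F : low_degree d F -> (d < m)%N ->
  \sum_(S : {set 'I_m}) (-1) ^+ #|S| * F S = 0.
Proof.
move=> HF ltdm; rewrite -[RHS](alternating_sum_supset_eq0 HF (T := set0)) ?cards0 //.
by apply: eq_bigl => S; rewrite sub0set.
Qed.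

End LowDegree.

Section FiniteField.
Variables (F : finFieldType) (m : nat).

Lemma expf_card_pred (a : F) : a ^+ #|F|.-1 = (a != 0)%:R.
Proof.
have q_gt1 := finNzRing_gt1 F.
have [->|a_neq0] := eqVneq a 0.
  by rewrite expr0n; case: #|F| q_gt1 => [|[|]].
by apply: (mulfI a_neq0); rewrite mulr1 -exprS prednK ?expf_card // ltnW.
Qed.

Lemma low_degree_sum_eq0 (g : 'I_m -> F) :
  low_degree #|F|.-1 (fun S : {set 'I_m} => (\sum_(i in S) g i == 0)%:R : F).
Proof.
have := low_degree_exp #|F|.-1 (low_degree_linear g); rewrite muln1 => Hexp.
apply: low_degree_ext
  (low_degree_add (low_degree_const _ _ 1) (low_degree_scale (-1) Hexp)) _ => S.
by rewrite mulN1r expf_card_pred; case: eqP; rewrite ?subr0 ?subrr.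
Qed.

Lemma alternating_sum_common_zeros (gs : seq ('I_m -> F)) :
    (size gs * #|F|.-1 < m)%N ->
  \sum_(S : {set 'I_m}) (-1) ^+ #|S| * \prod_(g <- gs) (\sum_(i in S) g i == 0)%:R
    = 0 :> F.
Proof.
move=> small; apply: alternating_sum_eq0 small.
exact: low_degree_prod low_degree_sum_eq0.
Qed.

End FiniteField.

Lemma signed_dvdn_indicator (R : pzRingType) (p k : nat) :
    odd p -> (k < 3 * p)%N ->
  (-1) ^+ k * (p %| k)%:R = (k == 0)%:R - (k == p)%:R + (k == 2 * p)%:R :> R.
Proof.
move=> odd_p; have p_gt0 : (0 < p)%N by case: p odd_p.
have [/dvdnP [q ->]|p_ndvd_k] := boolP (p %| k)%N => lt_k3p; last first.
  have k_neq n : (k == n * p)%N = false.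
    by apply: contraNF p_ndvd_k => /eqP ->; rewrite dvdn_mull.
  move: (k_neq 0%N) (k_neq 1%N); rewrite mul0n mul1n => -> ->.
  by rewrite k_neq mulr0 subr0 addr0.
have eq_qp n : (q * p == n * p)%N = (q == n) := eqn_pmul2r p_gt0.
have := eq_qp 0%N; have := eq_qp 1%N; rewrite mul0n mul1n => -> ->.
rewrite eq_qp mulr1 -signr_odd oddM odd_p andbT signr_odd.
have lt_q3 : (q < 3)%N by rewrite -(ltn_pmul2r p_gt0).
by case: q {eq_qp lt_k3p} lt_q3 => [|[|[|q]]] //= _;
  rewrite ?subr0 ?sub0r ?addr0 ?add0r ?expr0 ?expr1 ?sqrrN ?expr1n.
Qed.

Definition zero_sum_mod (p : nat) (X : seq (int * int)) (S : {set 'I_(size X)}) :=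
  (((fam_sum S).1 %% p%:Z)%Z == 0) && (((fam_sum S).2 %% p%:Z)%Z == 0).

Lemma zsum_countE (R : pzSemiRingType) (p n : nat) (X : seq (int * int)) :
  (zsum_count p n X)%:R =
    \sum_(S : {set 'I_(size X)}) (#|S| == n)%:R * (zero_sum_mod p S)%:R :> R.
Proof.
rewrite /zsum_count -sum1dep_card natr_sum big_mkcond /=.
by apply: eq_bigr => S _; rewrite -andbA -natrM mulnb; case: ifP.
Qed.

Lemma zsum_count0 (p : nat) (X : seq (int * int)) : zsum_count p 0 X = 1%N.
Proof.
rewrite /zsum_count (_ : [set _ | _] = [set set0]) ?cards1 //.
apply/setP => S; rewrite !inE cards_eq0.
by case: eqP => [->|] //=; rewrite /fam_sum !big_set0 mod0z.
Qed.

Lemma zero_sum_mod_Fp (p : nat) (X : seq (int * int)) (S : {set 'I_(size X)}) :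
  prime p -> zero_sum_mod p S =
    (\sum_(i in S) ((tnth (in_tuple X) i).1)%:~R == 0 :> 'F_p) &&
    (\sum_(i in S) ((tnth (in_tuple X) i).2)%:~R == 0 :> 'F_p).
Proof.
move=> p_pr; rewrite /zero_sum_mod !(sameP eqP dvdz_mod0P).
by rewrite !(dvdz_pcharf (pchar_Fp p_pr)) !rmorph_sum.
Qed.

Theorem corollary2 (p : nat) (J : seq (int * int)) :
  prime p -> odd p ->
  (size J = 3 * p - 2)%N \/ (size J = 3 * p - 1)%N ->
  ((1 - (zsum_count p p J)%:Z + (zsum_count p (2 * p) J)%:Z) = 0 %[mod p%:Z])%Z.
Proof.
move=> p_pr odd_p size_J; have p_gt1 := prime_gt1 p_pr.
pose coord (f : int * int -> int) (i : 'I_(size J)) : 'F_p :=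
  (f (tnth (in_tuple J) i))%:~R.
have small : (size [:: fun=> 1%R; coord fst; coord snd] * #|'F_p|.-1 < size J)%N.
  by rewrite card_Fp //=; lia.
have := alternating_sum_common_zeros small.
under eq_bigr => S _.
  rewrite !big_cons big_nil mulr1 sumr_const -(dvdn_pcharf (pchar_Fp p_pr)).
  rewrite mulrA -natrM mulnb -zero_sum_mod_Fp // signed_dvdn_indicator //.
    by rewrite mulrDl mulrBl; over.
  by rewrite (leq_ltn_trans (max_card _)) // card_ord; lia.
rewrite big_split sumrB /= -!zsum_countE zsum_count0 => sum_eq0.
rewrite mod0z; apply/dvdz_mod0P; rewrite (dvdz_pcharf (pchar_Fp p_pr)).
by rewrite rmorphD rmorphB /= -sum_eq0.
Qed.
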